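(* Let $a,b,c$ be non-constant polynomials in $\mathbb{F}_2[t]$ and let $\boldsymbol{\varepsilon}=(a,b,c)^\infty$, i.e. $\varepsilon_{3m}=a$, $\varepsilon_{3m+1}=b$, $\varepsilon_{3m+2}=c$ for $m\geq 0$. Let $\beta=1/CF(\mathbf{s}(\boldsymbol{\varepsilon}))$. Then $$\beta^8=A+B_0\beta+B_1\beta^2+B_2\beta^4,$$ where $A,B_0,B_1,B_2\in\mathbb{F}_2[t]$ are $$A=a^3b^2c + a^2b^2c^2 + ab^3c^2 + b^4c^2 + ab^2c^3 + abc^4 + a^2bc + ab^2c + abc^2 + c^4 + 1,$$ $$B_0= a^4b^2c + a^3b^2c^2 + a^2b^3c^2 + ab^4c^2 + a^2b^2c^3 + a^2bc^4,$$ $$B_1=a^3b^2c + a^2b^2c^2 + ab^3c^2 + a^2bc^3,$$ $$B_2=a^2bc + ab^2c + abc^2.$$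
   Context: Given a sequence $\boldsymbol{\varepsilon}=(\varepsilon_n)_{n\geq 0}$, define words $W_0=$ empty word and $W_{n+1}=W_n\,\varepsilon_n\,W_n$ (concatenation) for $n\geq 0$; $\mathbf{s}(\boldsymbol{\varepsilon})=(s_i)_{i\geq 0}$ is the infinite word beginning with every $W_n$, i.e. $\varepsilon_0\varepsilon_1\varepsilon_0\varepsilon_2\varepsilon_0\varepsilon_1\varepsilon_0\varepsilon_3\cdots$. $CF(\mathbf{s}(\boldsymbol{\varepsilon}))=[s_0,s_1,\dots]=s_0+1/(s_1+1/(s_2+\cdots))$ is the infinite continued fraction in $\mathbb{F}_2((1/t))$ with these partial quotients. *)

(* The field F_2((1/t)) of formal Laurent series in 1/t over F_2
   is modelled by coefficient functions  int -> 'F_2  (f k = coefficient of t^k)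
   whose support is bounded above. *)
From mathcomp Require Import all_boot all_algebra.
From Stdlib Require Import ClassicalEpsilon.
Set Implicit Arguments. Unset Strict Implicit. Unset Printing Implicit Defensive.
Import GRing.Theory Num.Theory.
Local Open Scope ring_scope.

Definition F2 := 'F_2.
Definition laurent := int -> F2.

Definition is_laurent (f : laurent) : Prop := exists N : int, forall k : int, N < k -> f k = 0.

(* some upper bound of the support (any valid bound gives the same products) *)
Definition bnd (f : laurent) : int :=
  epsilon (inhabits 0%R) (fun N : int => forall k : int, N < k -> f k = 0).

Definition lzero : laurent := fun _ => 0.
Definition lone : laurent := fun k => if k == 0 then 1 else 0.
Definition ladd (f g : laurent) : laurent := fun k => f k + g k.

(* Cauchy product: coefficient of t^k is sum_{i + j = k} f_i g_j *)
Definition lmul (f g : laurent) : laurent := fun k =>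
  match bnd f + bnd g - k with
  | Posz m => \sum_(j < m.+1) f (k - bnd g + (j : nat)%:Z) * g (bnd g - (j : nat)%:Z)
  | Negz _ => 0
  end.

Fixpoint lexp (f : laurent) (n : nat) : laurent :=
  match n with 0%N => lone | n'.+1 => lmul f (lexp f n') end.

(* multiplicative inverse: the Laurent series y with f * y = 1 (0 if none) *)
Definition linv (f : laurent) : laurent :=
  epsilon (inhabits lzero) (fun y => is_laurent y /\ lmul f y = lone).

Definition lpoly (p : {poly F2}) : laurent := fun k =>
  match k with Posz n => p`_n | Negz _ => 0 end.

(* convergence for the (1/t)-adic absolute value |f| = 2^(deg f):
   u_n -> x iff for every M the coefficients of t^k, k >= M, eventually agree *)
Definition lcvg (u : nat -> laurent) (x : laurent) : Prop :=
  forall M : int, exists n0 : nat, forall n : nat, (n0 <= n)%N ->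
    forall k : int, M <= k -> u n k = x k.

Definition cf_fin (s : nat -> laurent) (n : nat) : laurent :=
  foldr (fun a acc => ladd a (linv acc)) (s n) [seq s i | i <- iota 0 n].

Fixpoint Wword (T : Type) (eps : nat -> T) (n : nat) : seq T :=
  match n with
  | 0%N => [::]
  | n'.+1 => Wword eps n' ++ eps n' :: Wword eps n'
  end.

(* s(eps): the infinite word beginning with every W_n; W_{i+1} has length 2^(i+1)-1 > i *)
Definition sword (T : Type) (x0 : T) (eps : nat -> T) (i : nat) : T :=
  nth x0 (Wword eps i.+1) i.

Definition eps3 (T : Type) (a b c : T) (n : nat) : T :=
  if (n %% 3 == 0)%N then a else if (n %% 3 == 1)%N then b else c.

(* Ring laws are checked
      after truncation: near a fixed coefficient a product only depends on
      finitely many coefficients of its factors ([lmul_agree]), so it can be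
      computed by a product of polynomials ([shp_mul]).  The finite continued fraction [s_0, ..., s_n] is
      p/q, where (p, q) is the first column of the product of the matrices
      [[s_i, 1], [1, 0]]; these have determinant 1, hence consecutive
      convergents differ by 1/(q_n q_(n+1)), and the convergents converge.
   3. The folded word.  For the word W_N the matrix is [[p_N, r_N], [r_N, u_N]]
      with p_(N+1) = e_N p_N^2, r_(N+1) = e_N p_N r_N + 1, so beta is the limit
      of r_N / p_N.  For N = 3K we split r_N = Y0 + Y1 + Y2 with quadratic
      relations between the Y_i; in characteristic 2 these give the polynomial
      identity [hform_period]: with Phi z = z^8 + A + B0 z + B1 z^2 + B2 z^4,
      Phi (r_N / p_N) = (C1 p_N^6 + C2 p_N^4 + 1) / p_N^8, of degree at most
      const - 2 deg p_N.
   4. Since Phi is continuous, passing to the limit K -> oo gives Phi beta = 0,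
      which in characteristic 2 is the stated equation ([mainTheorem5]). *)
From HB Require Import structures.
From mathcomp Require Import all_boot all_algebra.
From mathcomp Require Import boolp.
From mathcomp Require Import ring zify.
From Stdlib Require Import ClassicalEpsilon.
Unset Printing Implicit Defensive.
Import GRing.Theory Num.Theory.
Local Open Scope ring_scope.

Lemma F2_addxx (x : F2) : x + x = 0.
Proof. by rewrite -mulr2n -mulr_natr (_ : 2%:R = 0 :> F2) ?mulr0 //; apply/eqP. Qed.

Lemma F2_add_eq0 (x y : F2) : x + y = 0 -> x = y.
Proof. by move=> H; rewrite -[y]add0r -H -addrA F2_addxx addr0. Qed.

(* The hypothesis handed to [ring] to compute modulo 2 in F_2[t]. *)
Lemma poly_two0 : (2%:R : {poly F2}) = 0.
Proof. by rewrite -polyC_natr; congr polyC; apply/eqP. Qed.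

Lemma polyF2_oppE (p : {poly F2}) : - p = p.
Proof. by apply/eqP; rewrite eq_sym -subr_eq0 opprK; apply/eqP; ring: poly_two0. Qed.

Definition deg_le (f : laurent) (N : int) := forall k : int, N < k -> f k = 0.

Definition agree (M : int) (f g : laurent) := forall k, M <= k -> f k = g k.

Lemma bndP {f} : is_laurent f -> deg_le f (bnd f).
Proof. by move=> H; rewrite /bnd; exact: (epsilon_spec (inhabits 0) _ H). Qed.

Lemma deg_le_trans {f N M} : deg_le f N -> N <= M -> deg_le f M.
Proof. by move=> H NM k Mk; apply: H; lia. Qed.

Lemma deg_le_laurent {f N} : deg_le f N -> is_laurent f.
Proof. by exists N. Qed.

Lemma deg_le_exists {f} : is_laurent f -> exists N, 0 <= N /\ deg_le f N.
Proof.
move=> Lf; exists (absz (bnd f))%:Z; split; first by lia.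
by apply: deg_le_trans (bndP Lf) _; lia.
Qed.

Lemma deg_le_exists2 {f g} : is_laurent f -> is_laurent g ->
  exists N, 0 <= N /\ deg_le f N /\ deg_le g N.
Proof.
move=> /deg_le_exists [N1 [P1 V1]] /deg_le_exists [N2 [P2 V2]].
exists (N1 + N2); split; first by lia.
by split; [apply: deg_le_trans V1 _ | apply: deg_le_trans V2 _]; lia.
Qed.

Lemma agree_le {M M' f g} : agree M f g -> M <= M' -> agree M' f g.
Proof. by move=> A H k Hk; apply: A; lia. Qed.

Lemma agree_trans {M f g h} : agree M f g -> agree M g h -> agree M f h.
Proof. by move=> H1 H2 k Hk; rewrite H1 ?H2. Qed.

(* In characteristic 2, f and g agree above the degree of f + g. *)
Lemma agree_of_sum {f g V} : deg_le (ladd f g) V -> agree (V + 1) f g.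
Proof. by move=> H k Hk; apply: F2_add_eq0; apply: H; lia. Qed.

Section StabilisingLimit.
Variable u : nat -> laurent.
Hypothesis u_step : forall n, agree (- n%:Z) (u n.+1) (u n).

Lemma stab_agree {m n} : (n <= m)%N -> agree (- n%:Z) (u m) (u n).
Proof.
move=> /subnKC <-; elim: (m - n)%N => [|d IH]; first by rewrite addn0.
apply: agree_trans IH; rewrite addnS => k Hk; rewrite u_step //; lia.
Qed.

Definition climit : laurent := fun k => u (absz k) k.

Lemma climit_agree n : agree (- n%:Z) climit (u n).
Proof.
move=> k Hk; rewrite /climit.
have [H|H] := leqP n (absz k); first by rewrite (stab_agree H).
by rewrite (stab_agree (ltnW H)) //; lia.
Qed.

Lemma climit_lcvg : lcvg u climit.
Proof.
move=> M; exists (absz M) => n Hn k Hk.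
by rewrite (climit_agree n) //; lia.
Qed.

Lemma stab_deg_le N n : 0 <= N -> deg_le (u 0) N -> deg_le (u n) N.
Proof.
by move=> N0 V k Hk; rewrite (stab_agree (leq0n n)) ?V //; lia.
Qed.

Lemma climit_deg_le N : (forall n, deg_le (u n) N) -> deg_le climit N.
Proof. by move=> V k Hk; apply: V. Qed.

Lemma lcvg_agree {x} n : lcvg u x -> agree (- n%:Z) x (u n).
Proof.
move=> Hx k Hk; have [n0 Hn0] := Hx k.
by rewrite -(Hn0 (n0 + n)%N) ?leq_addr // (stab_agree (leq_addl n0 n)).
Qed.

End StabilisingLimit.
Arguments stab_agree {u} u_step {m n}.
Arguments climit_agree {u} u_step n.
Arguments climit_lcvg {u} u_step.
Arguments stab_deg_le {u} u_step {N} n.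
Arguments climit_deg_le {u N}.
Arguments lcvg_agree {u} u_step {x} n.

Definition wsum (h : int -> F2) (b : int) (n : nat) : F2 :=
  \sum_(j < n) h (b + (j : nat)%:Z).

Lemma wsum_pad h b n d e : (forall i, (i < b) || (b + n%:Z <= i) -> h i = 0) ->
  wsum h (b - d%:Z) (d + n + e) = wsum h b n.
Proof.
move=> S; rewrite /wsum big_split_ord /=.
rewrite [X in _ + X]big1 ?addr0; last first.
  by move=> i _; apply: S; apply/orP; right; rewrite /=; lia.
rewrite big_split_ord /= big1 ?add0r; last first.
  by move=> i _; apply: S; apply/orP; left; have := ltn_ord i; rewrite /=; lia.
by apply: eq_bigr => i _; congr h; rewrite /=; lia.
Qed.

Lemma wsum_window h lo hi b n b' n' :
  (forall i, (i < lo) || (hi < i) -> h i = 0) ->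
  b <= lo -> hi < b + n%:Z -> b' <= lo -> hi < b' + n'%:Z ->
  wsum h b n = wsum h b' n'.
Proof.
move=> S H1 H2 H3 H4.
pose B := Num.min b b'; pose E := Num.max (b + n%:Z) (b' + n'%:Z).
have pad (c : int) (m : nat) : c <= lo -> hi < c + m%:Z -> B <= c -> c + m%:Z <= E ->
    wsum h B (absz (E - B)) = wsum h c m.
  move=> Hc Hm HB HE.
  rewrite -(@wsum_pad h c m (absz (c - B)%R) (absz (E - (c + m%:Z))%R)).
    by congr wsum; lia.
  by move=> i /orP [] Hi; apply: S; apply/orP; [left|right]; lia.
rewrite -pad // -?[in RHS]pad //; rewrite /B /E; lia.
Qed.

Lemma lmulE {f g Nf Ng} k b n : is_laurent f -> is_laurent g ->
  deg_le f Nf -> deg_le g Ng -> b <= k - Ng -> Nf < b + n%:Z ->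
  lmul f g k = wsum (fun i => f i * g (k - i)) b n.
Proof.
move=> Lf Lg Vf Vg H1 H2.
have Bf := bndP Lf; have Bg := bndP Lg.
have Z i : (i < k - Ng) || (i < k - bnd g) || (Nf < i) || (bnd f < i) ->
    f i * g (k - i) = 0.
  move=> /orP [/orP [/orP [] | ] | ] Hi.
  - by rewrite Vg ?mulr0 //; lia.
  - by rewrite Bg ?mulr0 //; lia.
  - by rewrite Vf ?mul0r.
  - by rewrite Bf ?mul0r.
rewrite /lmul; case E: (bnd f + bnd g - k) => [m|m]; last first.
  by rewrite /wsum big1 // => j _; apply: Z; lia.
have -> : \sum_(j < m.+1) f (k - bnd g + (j : nat)%:Z) * g (bnd g - (j : nat)%:Z)
        = wsum (fun i => f i * g (k - i)) (k - bnd g) m.+1.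
  by apply: eq_bigr => j _; congr (_ * g _); lia.
apply: (@wsum_window _ (Num.max (k - Ng) (k - bnd g)) (Num.min Nf (bnd f))); try lia.
by move=> i /orP [] Hi; apply: Z; lia.
Qed.

Lemma lmul_deg_le {f g Nf Ng} : is_laurent f -> is_laurent g ->
  deg_le f Nf -> deg_le g Ng -> deg_le (lmul f g) (Nf + Ng).
Proof.
move=> Lf Lg Vf Vg k Hk.
by rewrite (lmulE k (k - Ng) 0 Lf Lg Vf Vg) ?/wsum ?big_ord0 //; lia.
Qed.

Lemma lmul_laurent {f g} : is_laurent f -> is_laurent g -> is_laurent (lmul f g).
Proof.
by move=> Lf Lg; exact: deg_le_laurent (lmul_deg_le Lf Lg (bndP Lf) (bndP Lg)).
Qed.

Lemma lmul_agree {f f' g g' N1 N2 M} :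
  is_laurent f -> is_laurent f' -> is_laurent g -> is_laurent g' ->
  0 <= N1 -> 0 <= N2 ->
  deg_le f N1 -> deg_le f' N1 -> deg_le g N2 -> deg_le g' N2 ->
  agree M f f' -> agree M g g' -> agree (M + N1 + N2) (lmul f g) (lmul f' g').
Proof.
move=> Lf Lf' Lg Lg' P1 P2 Vf Vf' Vg Vg' Af Ag k Hk.
pose n := (absz (N1 - (k - N2))%R).+1.
rewrite (lmulE k (k - N2) n Lf Lg Vf Vg) ?(lmulE k (k - N2) n Lf' Lg' Vf' Vg'); try lia.
apply: eq_bigr => j _.
have [H|H] := lerP (k - N2 + (j : nat)%:Z) N1; first by rewrite Af ?Ag //; lia.
by rewrite Vf ?Vf' ?mul0r.
Qed.

Definition shp (p : {poly F2}) (e : int) : laurent := fun k =>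
  match k - e with Posz n => p`_n | Negz _ => 0 end.

Lemma shpE p e (n : nat) : shp p e (e + n%:Z) = p`_n.
Proof. by rewrite /shp (_ : e + n%:Z - e = n%:Z) //; lia. Qed.

Lemma shp_lt p e k : k < e -> shp p e k = 0.
Proof. by rewrite /shp; case E: (k - e) => [n|n] //; lia. Qed.

Lemma shp_deg_le p e : deg_le (shp p e) (e + (size p)%:Z).
Proof.
move=> k Hk; rewrite /shp; case E: (k - e) => [n|n] //.
by rewrite nth_default //; move: Hk E; rewrite /=; lia.
Qed.

Lemma shp_laurent p e : is_laurent (shp p e).
Proof. exact: deg_le_laurent (shp_deg_le p e). Qed.

Lemma lpoly_shp p : lpoly p = shp p 0.
Proof. by apply: funext => k; rewrite /shp subr0. Qed.

Lemma lone_shp : lone = shp 1 0.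
Proof. by apply: funext => -[[|n]|n] //=; rewrite /shp subr0 coef1. Qed.

Lemma shp_mul p q e1 e2 : lmul (shp p e1) (shp q e2) = shp (p * q) (e1 + e2).
Proof.
apply: funext => k.
pose N1 := e1 + (size p)%:Z; pose N2 := e2 + (size q)%:Z.
pose b := Num.min (k - N2) e1.
pose n := absz (Num.max N1 (e1 + absz (k - e1 - e2)%R) - b)%R + 1.
rewrite (lmulE k b n (shp_laurent p e1) (shp_laurent q e2) (shp_deg_le p e1)
  (shp_deg_le q e2)); try lia.
case E: (k - (e1 + e2)) => [D|D]; last first.
  rewrite {3}/shp E /wsum big1 // => j _; rewrite /shp.
  case E1: (b + (j : nat)%:Z - e1) => [x|x]; last by rewrite mul0r.
  by case E2: (k - (b + (j : nat)%:Z) - e2) => [y|y]; [lia | rewrite mulr0].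
have -> : shp (p * q) (e1 + e2) k =
    wsum (fun i => shp p e1 i * shp q e2 (k - i)) e1 D.+1.
  rewrite /shp E coefM /wsum; apply: eq_bigr => j _.
  have Hj := ltn_ord j.
  rewrite (_ : e1 + (j : nat)%:Z - e1 = (j : nat)%:Z); last by lia.
  by rewrite (_ : k - (e1 + (j : nat)%:Z) - e2 = (D - j)%N%:Z) //; lia.
apply: (@wsum_window _ e1 (e1 + D%:Z)); try lia.
move=> i /orP [] Hi; first by rewrite shp_lt ?mul0r.
by rewrite [shp q e2 _]shp_lt ?mulr0 //; lia.
Qed.

Definition trunc (f : laurent) (M N : int) : {poly F2} :=
  \poly_(i < (absz (N - M)%R).+1) f (M + i%:Z).

Lemma trunc_agree {f N} M : deg_le f N -> agree M f (shp (trunc f M N) M).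
Proof.
move=> Vf k Hk.
have [m ->] : exists m : nat, k = M + m%:Z by exists (absz (k - M)); lia.
rewrite shpE coef_poly; case: ifP => H //.
by rewrite Vf //; move: H; rewrite /=; lia.
Qed.

Lemma trunc_deg_le {f N} M : deg_le f N -> deg_le (shp (trunc f M N) M) N.
Proof.
move=> Vf k Hk.
have [H|H] := ltrP k M; first by rewrite shp_lt.
by rewrite -(trunc_agree M Vf) ?Vf.
Qed.

Lemma lmul_trunc {f g N} M : is_laurent f -> is_laurent g -> 0 <= N ->
  deg_le f N -> deg_le g N ->
  agree (M + N + N) (lmul f g) (shp (trunc f M N * trunc g M N) (M + M)).
Proof.
move=> Lf Lg N0 Vf Vg; rewrite -shp_mul.
exact: (lmul_agree Lf (shp_laurent _ _) Lg (shp_laurent _ _) N0 N0 Vf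
  (trunc_deg_le M Vf) Vg (trunc_deg_le M Vg) (trunc_agree M Vf) (trunc_agree M Vg)).
Qed.

(* Commutativity: near coefficient k both products are shifted products of
   the same two truncations. *)
Lemma lmulC {f g} : is_laurent f -> is_laurent g -> lmul f g = lmul g f.
Proof.
move=> Lf Lg; apply: funext => k.
have [N [N0 [Vf Vg]]] := deg_le_exists2 Lf Lg.
pose M := k - N - N.
rewrite (lmul_trunc M Lf Lg N0 Vf Vg); last by lia.
by rewrite (lmul_trunc M Lg Lf N0 Vg Vf) 1?mulrC //; lia.
Qed.

(* Associativity, by the same reduction to three truncations. *)
Lemma lmulA {f g h} : is_laurent f -> is_laurent g -> is_laurent h ->
  lmul f (lmul g h) = lmul (lmul f g) h.
Proof.
move=> Lf Lg Lh; apply: funext => k.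
have [N1 [P1 [Vf Vg]]] := deg_le_exists2 Lf Lg.
have [N2 [P2 Vh]] := deg_le_exists Lh.
pose N := N1 + N2; have N0 : 0 <= N by lia.
have {}Vf : deg_le f N by apply: deg_le_trans Vf _; lia.
have {}Vg : deg_le g N by apply: deg_le_trans Vg _; lia.
have {}Vh : deg_le h N by apply: deg_le_trans Vh _; lia.
pose M := k - N *+ 5; pose T u := shp (trunc u M N) M.
have LT u : is_laurent (T u) by apply: shp_laurent.
have VT u : deg_le u N -> deg_le (T u) N by apply: trunc_deg_le.
have AT u : deg_le u N -> agree (M + N + N) u (T u).
  by move=> Vu; apply: agree_le (trunc_agree M Vu) _; lia.
have NN : 0 <= N + N by lia.
have El := lmul_agree Lf (LT f) (lmul_laurent Lg Lh) (lmul_laurent (LT g) (LT h)) N0 NN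
  Vf (VT f Vf) (lmul_deg_le Lg Lh Vg Vh) (lmul_deg_le (LT g) (LT h) (VT g Vg) (VT h Vh))
  (AT f Vf) (lmul_agree Lg (LT g) Lh (LT h) N0 N0 Vg (VT g Vg) Vh (VT h Vh)
     (trunc_agree M Vg) (trunc_agree M Vh)).
have Er := lmul_agree (lmul_laurent Lf Lg) (lmul_laurent (LT f) (LT g)) Lh (LT h) NN N0
  (lmul_deg_le Lf Lg Vf Vg) (lmul_deg_le (LT f) (LT g) (VT f Vf) (VT g Vg)) Vh (VT h Vh)
  (lmul_agree Lf (LT f) Lg (LT g) N0 N0 Vf (VT f Vf) Vg (VT g Vg)
     (trunc_agree M Vf) (trunc_agree M Vg)) (AT h Vh).
rewrite El; last by lia.
rewrite Er; last by lia.
by rewrite /T !shp_mul mulrA addrA.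
Qed.

(* 1 is a unit for the product: compare with t^M (truncation of f) near k. *)
Lemma lone_laurent : is_laurent lone.
Proof. by rewrite lone_shp; apply: shp_laurent. Qed.

Lemma lmul1 {f} : is_laurent f -> lmul lone f = f.
Proof.
move=> Lf; apply: funext => k.
have [N [N0 Vf]] := deg_le_exists Lf.
have V1 : deg_le lone 1.
  by rewrite lone_shp; apply: deg_le_trans (shp_deg_le 1 0) _; rewrite size_poly1.
pose M := k - 1 - N.
rewrite (lmul_agree lone_laurent lone_laurent Lf (shp_laurent _ M) ler01 N0 V1 V1 Vf
  (trunc_deg_le M Vf) (fun _ _ => erefl) (trunc_agree M Vf)); last by lia.
by rewrite {1}lone_shp shp_mul mul1r add0r -(trunc_agree M Vf) //; lia.
Qed.

(* Sums of Laurent series, and distributivity: on a common window the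
   coefficientwise sum is a sum of window sums. *)
Lemma ladd_laurent {f g} : is_laurent f -> is_laurent g -> is_laurent (ladd f g).
Proof.
move=> Lf Lg; have [N [_ [Vf Vg]]] := deg_le_exists2 Lf Lg.
by exists N => k Hk; rewrite /ladd Vf ?Vg ?addr0.
Qed.

Lemma lmulDr {f g h} : is_laurent f -> is_laurent g -> is_laurent h ->
  lmul f (ladd g h) = ladd (lmul f g) (lmul f h).
Proof.
move=> Lf Lg Lh; apply: funext => k.
have [N1 [P1 [Vf Vg]]] := deg_le_exists2 Lf Lg.
have [N2 [P2 Vh]] := deg_le_exists Lh.
pose N := N1 + N2.
have {}Vf : deg_le f N by apply: deg_le_trans Vf _; lia.
have {}Vg : deg_le g N by apply: deg_le_trans Vg _; lia.
have {}Vh : deg_le h N by apply: deg_le_trans Vh _; lia.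
have Vgh : deg_le (ladd g h) N by move=> i Hi; rewrite /ladd Vg ?Vh ?addr0.
pose n := (absz (N - (k - N))%R).+1.
rewrite {2}/ladd (lmulE k (k - N) n Lf (ladd_laurent Lg Lh) Vf Vgh); try lia.
rewrite (lmulE k (k - N) n Lf Lg Vf Vg) ?(lmulE k (k - N) n Lf Lh Vf Vh); try lia.
by rewrite /wsum -big_split; apply: eq_bigr => j _; rewrite /ladd mulrDr.
Qed.

Lemma lzero_laurent : is_laurent lzero.
Proof. by exists 0. Qed.

Lemma lpoly_laurent p : is_laurent (lpoly p).
Proof. by rewrite lpoly_shp; exact: shp_laurent. Qed.

Lemma lpoly_deg_le p : deg_le (lpoly p) ((size p)%:Z - 1).
Proof.
move=> [n|n] Hk //=; rewrite nth_default //.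
by move: Hk; set s := size p; clearbody s; lia.
Qed.

Definition LS := {f : laurent | is_laurent f}.
HB.instance Definition _ := gen_eqMixin LS.
HB.instance Definition _ := gen_choiceMixin LS.

Definition LSmk {f} (Lf : is_laurent f) : LS := exist _ f Lf.
Definition lsv (x : LS) : laurent := proj1_sig x.

Lemma lsvP (x : LS) : is_laurent (lsv x). Proof. exact: proj2_sig x. Qed.
#[local] Hint Resolve lsvP : core.

Lemma lsv_inj (x y : LS) : lsv x = lsv y -> x = y.
Proof.
by case: x => f Lf; case: y => g Lg /= E; subst g; rewrite (Prop_irrelevance Lf Lg).
Qed.

Definition LSadd (x y : LS) : LS := LSmk (ladd_laurent (lsvP x) (lsvP y)).
Definition LSmul (x y : LS) : LS := LSmk (lmul_laurent (lsvP x) (lsvP y)).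

Definition LS0 : LS := LSmk lzero_laurent.
Definition LS1 : LS := LSmk lone_laurent.

Lemma LSaddA : associative LSadd.
Proof. by move=> x y z; apply/lsv_inj/funext => k; rewrite /= /ladd addrA. Qed.

Lemma LSaddC : commutative LSadd.
Proof. by move=> x y; apply/lsv_inj/funext => k; rewrite /= /ladd addrC. Qed.

Lemma LSadd0 : left_id LS0 LSadd.
Proof. by move=> x; apply/lsv_inj/funext => k; rewrite /= /ladd add0r. Qed.

Lemma LSaddxx : left_inverse LS0 id LSadd.
Proof. by move=> x; apply/lsv_inj/funext => k; rewrite /= /ladd F2_addxx. Qed.

HB.instance Definition _ := GRing.isZmodule.Build LS LSaddA LSaddC LSadd0 LSaddxx.

Lemma LSmulA : associative LSmul.
Proof. by move=> x y z; apply: lsv_inj; rewrite /= lmulA. Qed.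

Lemma LSmulC : commutative LSmul.
Proof. by move=> x y; apply: lsv_inj; rewrite /= lmulC. Qed.

Lemma LSmul1 : left_id LS1 LSmul.
Proof. by move=> x; apply: lsv_inj; rewrite /= lmul1. Qed.

Lemma LSmulDl : left_distributive LSmul (+%R : LS -> LS -> LS).
Proof.
move=> x y z; apply: lsv_inj; rewrite /= lmulC ?lmulDr //; last exact: ladd_laurent.
by rewrite !(lmulC (lsvP z)).
Qed.

Lemma LS1_neq0 : LS1 != 0.
Proof. by apply/eqP => /(congr1 (fun x => lsv x 0)). Qed.

HB.instance Definition _ :=
  GRing.Zmodule_isComNzRing.Build LS LSmulA LSmulC LSmul1 LSmulDl LS1_neq0.

Lemma lsvD (x y : LS) : lsv (x + y) = ladd (lsv x) (lsv y). Proof. by []. Qed.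
Lemma lsvM (x y : LS) : lsv (x * y) = lmul (lsv x) (lsv y). Proof. by []. Qed.

Lemma lexpE (x : LS) n : lexp (lsv x) n = lsv (x ^+ n).
Proof. by elim: n => [|n IH] //=; rewrite IH exprS. Qed.

Lemma LS_addr_eq0 (x y : LS) : x + y = 0 -> x = y.
Proof. by move/eqP; rewrite addr_eq0 => /eqP ->. Qed.

Definition LP (p : {poly F2}) : LS := LSmk (lpoly_laurent p).

Lemma LPM p q : LP (p * q) = LP p * LP q.
Proof. by apply: lsv_inj; rewrite /= !lpoly_shp shp_mul addr0. Qed.

Lemma LPD p q : LP (p + q) = LP p + LP q.
Proof. by apply/lsv_inj/funext => -[n|n]; rewrite /= /ladd /lpoly ?coefD ?addr0. Qed.

Lemma LP1 : LP 1 = 1.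
Proof. by apply: lsv_inj; rewrite /= lpoly_shp lone_shp. Qed.

Lemma LP0 : LP 0 = 0.
Proof. by apply/lsv_inj/funext => -[n|n]; rewrite /= /lpoly ?coef0. Qed.

Lemma LPX p n : LP (p ^+ n) = LP p ^+ n.
Proof. by elim: n => [|n IH]; rewrite ?expr0 ?LP1 // !exprS LPM IH. Qed.

Lemma LS_deg_le_exp {x : LS} n : deg_le (lsv x) 0 -> deg_le (lsv (x ^+ n)) 0.
Proof.
move=> V; elim: n => [|n IH].
  by move=> k Hk; rewrite /= /lone; case: eqP => // E; lia.
by rewrite exprS lsvM -[0]addr0; apply: lmul_deg_le.
Qed.

Lemma LS_agree_add {x x' y y' : LS} M : agree M (lsv x) (lsv x') ->
  agree M (lsv y) (lsv y') -> agree M (lsv (x + y)) (lsv (x' + y')).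
Proof. by move=> A1 A2 k Hk; rewrite !lsvD /ladd A1 ?A2. Qed.

Lemma LS_agree_exp {x x' : LS} n M : deg_le (lsv x) 0 -> deg_le (lsv x') 0 ->
  agree M (lsv x) (lsv x') -> agree M (lsv (x ^+ n)) (lsv (x' ^+ n)).
Proof.
move=> V V' A; elim: n => [|n IH]; first by rewrite !expr0.
have Z0 : (0 : int) <= 0 by [].
have := lmul_agree (lsvP x) (lsvP x') (lsvP _) (lsvP _) Z0 Z0 V V'
  (LS_deg_le_exp n V) (LS_deg_le_exp n V') A IH.
by rewrite !exprS !lsvM !addr0.
Qed.

Lemma LS_agree_LPmul (p : {poly F2}) {x x' : LS} M : deg_le (lsv x) 0 ->
  deg_le (lsv x') 0 -> agree M (lsv x) (lsv x') ->
  agree (M + (size p)%:Z) (lsv (LP p * x)) (lsv (LP p * x')).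
Proof.
move=> V V' A; have Z0 : (0 : int) <= 0 by []; have S0 : 0 <= (size p)%:Z by [].
have := lmul_agree (lsvP (LP p)) (lsvP (LP p)) (lsvP x) (lsvP x') S0 Z0
  (deg_le_trans (lpoly_deg_le p) _) (deg_le_trans (lpoly_deg_le p) _) V V'
  (fun _ _ => erefl) A.
by rewrite !lsvM addr0; apply; lia.
Qed.

(* Inverses of non-zero polynomials: 1/q is the limit of t^(-n) (t^n div q). *)
Section PolyInverse.
Variable q : {poly F2}.

Definition inv_approx (n : nat) : laurent := shp ('X^n %/ q) (- n%:Z).

Lemma divXn_shift n j : ('X^(n.+1) %/ q)`_j.+1 = ('X^n %/ q)`_j.
Proof.
have [->|q0] := eqVneq q 0; first by rewrite !divp0 !coef0.
rewrite exprS {1}(divp_eq 'X^n q) mulrDr mulrA divpD mulpK // coefD coefXM /=.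
rewrite [X in _ + X]nth_default ?addr0 // size_divp //.
apply: leq_trans (leq_sub2r _ (size_polyMleq _ _)) _.
have := ltn_modp 'X^n q; rewrite q0 size_polyX /=.
by set s := size (_ %% _); set sq := size q; lia.
Qed.

Lemma inv_approx_step n : agree (- n%:Z) (inv_approx n.+1) (inv_approx n).
Proof.
move=> k Hk.
have [m ->] : exists m : nat, k = - n%:Z + m%:Z by exists (absz (k + n%:Z)); lia.
rewrite /inv_approx shpE (_ : - n%:Z + m%:Z = - n.+1%:Z + m.+1%:Z); last by lia.
by rewrite shpE divXn_shift.
Qed.

Lemma inv_approx_deg_le n : deg_le (inv_approx n) (1 - (size q)%:Z).
Proof.
move=> k Hk.
have [H|H] := ltrP k (- n%:Z); first by rewrite /inv_approx shp_lt.
have [m Em] : exists m : nat, k = - n%:Z + m%:Z by exists (absz (k + n%:Z)); lia.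
rewrite Em /inv_approx shpE nth_default //.
have [q0|q0] := eqVneq q 0; first by rewrite q0 divp0 size_poly0.
rewrite size_divp // size_polyXn; have : (0 < size q)%N by rewrite size_poly_gt0.
by move: Hk; set sq := size q; lia.
Qed.

Definition ginv : laurent := climit inv_approx.

Lemma ginv_deg_le : deg_le ginv (1 - (size q)%:Z).
Proof. exact: climit_deg_le inv_approx_deg_le. Qed.

Lemma ginv_laurent : is_laurent ginv.
Proof. exact: deg_le_laurent ginv_deg_le. Qed.

(* q * t^(-n) (t^n div q) = 1 - t^(-n) (t^n mod q), and the last term has
   degree < size q - n. *)
Lemma ginv_mul : q != 0 -> lmul (lpoly q) ginv = lone.
Proof.
move=> q0; apply: funext => k.
pose n := (absz k + 2 * size q)%N.
have sq : (0 < size q)%N by rewrite size_poly_gt0.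
have Vg : deg_le ginv (size q)%:Z by apply: deg_le_trans ginv_deg_le _; lia.
have Vg' : deg_le (inv_approx n) (size q)%:Z.
  by apply: deg_le_trans (inv_approx_deg_le n) _; lia.
have S0 : 0 <= (size q)%:Z by [].
have Vq : deg_le (lpoly q) (size q)%:Z by apply: deg_le_trans (lpoly_deg_le q) _; lia.
rewrite (lmul_agree (lpoly_laurent q) (lpoly_laurent q) ginv_laurent (shp_laurent _ _)
  S0 S0 Vq Vq Vg Vg' (fun _ _ => erefl)
  (climit_agree inv_approx_step n)); last by lia.
have [m Em] : exists m : nat, k = - n%:Z + m%:Z by exists (absz (k + n%:Z)); lia.
rewrite Em lpoly_shp shp_mul add0r shpE mulrC.
have -> : 'X^n %/ q * q = 'X^n - 'X^n %% q by rewrite {2}(divp_eq 'X^n q) addrK.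
rewrite coefB coefXn [X in _ - X]nth_default ?subr0; last first.
  have := ltn_modp 'X^n q; rewrite q0; set sr := size ('X^n %% q).
  by move: Em; rewrite /n; set s := size q; clearbody sr s; lia.
by rewrite /lone; case: eqP => H1; case: eqP => H2 //; lia.
Qed.

End PolyInverse.

Definition IP (q : {poly F2}) : LS := LSmk (ginv_laurent q).

Lemma LP_IP {q} : q != 0 -> LP q * IP q = 1.
Proof. by move=> q0; apply: lsv_inj; rewrite /= ginv_mul. Qed.

Lemma IP_deg_le q : deg_le (lsv (IP q)) (1 - (size q)%:Z).
Proof. exact: ginv_deg_le. Qed.

Lemma LS_inv_unique (x y z : LS) : x * y = 1 -> x * z = 1 -> y = z.
Proof. by move=> H1 H2; rewrite -[y]mulr1 -H2 mulrA (mulrC y) H1 mul1r. Qed.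

Lemma IPM q1 q2 : q1 != 0 -> q2 != 0 -> IP (q1 * q2) = IP q1 * IP q2.
Proof.
move=> h1 h2; apply: (@LS_inv_unique (LP (q1 * q2))); first by rewrite LP_IP // mulf_neq0.
by rewrite LPM mulrACA !LP_IP // mulr1.
Qed.

Lemma IPX q n : q != 0 -> IP (q ^+ n) = IP q ^+ n.
Proof.
move=> q0; apply: (@LS_inv_unique (LP (q ^+ n))); first by rewrite LP_IP // expf_neq0.
by rewrite LPX -exprMn LP_IP // expr1n.
Qed.

Lemma IP1 : IP 1 = 1.
Proof. by apply: (@LS_inv_unique (LP 1)); rewrite ?LP_IP ?oner_neq0 // LP1 mulr1. Qed.

Lemma linvE {f g} : is_laurent f -> is_laurent g -> lmul f g = lone -> linv f = g.
Proof.
move=> Lf Lg fg1.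
have [Lh fh1] : is_laurent (linv f) /\ lmul f (linv f) = lone.
  exact: (epsilon_spec (inhabits lzero) (fun y => is_laurent y /\ lmul f y = lone)
    (ex_intro _ g (conj Lg fg1))).
have E := @LS_inv_unique (LSmk Lf) (LSmk Lh) (LSmk Lg).
by apply: (congr1 lsv (E _ _)); apply: lsv_inj.
Qed.

Lemma linvS {x y : LS} : x * y = 1 -> linv (lsv x) = lsv y.
Proof. by move=> xy1; apply: linvE => //; rewrite -lsvM xy1. Qed.

Definition FR (p q : {poly F2}) : LS := LP p * IP q.

Lemma FRD p1 q1 p2 q2 : q1 != 0 -> q2 != 0 ->
  FR p1 q1 + FR p2 q2 = FR (p1 * q2 + p2 * q1) (q1 * q2).
Proof.
move=> h1 h2; rewrite /FR IPM // LPD !LPM.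
have -> : (LP p1 * LP q2 + LP p2 * LP q1) * (IP q1 * IP q2) =
   LP p1 * IP q1 * (LP q2 * IP q2) + LP p2 * IP q2 * (LP q1 * IP q1) by ring.
by rewrite !LP_IP // !mulr1.
Qed.

Lemma FR_inv {p q} : p != 0 -> q != 0 -> FR p q * FR q p = 1.
Proof. by move=> p0 q0; rewrite /FR mulrACA (mulrC (IP q)) mulrACA !LP_IP // mulr1. Qed.

Lemma FR_deg_le p q : deg_le (lsv (FR p q)) ((size p)%:Z - (size q)%:Z).
Proof.
have := lmul_deg_le (lsvP (LP p)) (lsvP (IP q)) (lpoly_deg_le p) (IP_deg_le q).
by move=> V; rewrite /FR lsvM; apply: deg_le_trans V _; lia.
Qed.

Lemma FR_close (p1 q1 p2 q2 : {poly F2}) : q1 != 0 -> q2 != 0 ->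
  agree ((size (p1 * q2 + p2 * q1))%:Z + 1 - (size (q1 * q2))%:Z)
    (lsv (FR p1 q1)) (lsv (FR p2 q2)).
Proof.
move=> h1 h2; have := FR_deg_le (p1 * q2 + p2 * q1) (q1 * q2).
by rewrite -FRD // lsvD => /agree_of_sum A; apply: agree_le A _; lia.
Qed.

Record mat2 := Mat2 { m11 : {poly F2}; m12 : {poly F2}; m21 : {poly F2}; m22 : {poly F2} }.

Definition mmul (A B : mat2) : mat2 :=
  Mat2 (m11 A * m11 B + m12 A * m21 B) (m11 A * m12 B + m12 A * m22 B)
       (m21 A * m11 B + m22 A * m21 B) (m21 A * m12 B + m22 A * m22 B).

Definition mid : mat2 := Mat2 1 0 0 1.
Definition mdet (A : mat2) : {poly F2} := m11 A * m22 A - m12 A * m21 A.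

Definition mat (w : seq {poly F2}) : mat2 :=
  foldr (fun x M => mmul (Mat2 x 1 1 0) M) mid w.

Lemma mmulA A B C : mmul A (mmul B C) = mmul (mmul A B) C.
Proof. by case: A B C => ???? [????] [????]; rewrite /mmul /=; congr Mat2; ring. Qed.

Lemma mmul1 A : mmul mid A = A.
Proof. by case: A => ????; rewrite /mmul /=; congr Mat2; ring. Qed.

Lemma mat_cat w1 w2 : mat (w1 ++ w2) = mmul (mat w1) (mat w2).
Proof. by elim: w1 => [|x w IH] /=; rewrite ?mmul1 // IH mmulA. Qed.

Lemma mat_cons x w : mat (x :: w) =
  Mat2 (x * m11 (mat w) + m21 (mat w)) (x * m12 (mat w) + m22 (mat w))
       (m11 (mat w)) (m12 (mat w)).
Proof. by rewrite /= /mmul /=; congr Mat2; ring. Qed.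

Lemma m11_cons x w : m11 (mat (x :: w)) = x * m11 (mat w) + m21 (mat w).
Proof. by rewrite mat_cons. Qed.

Lemma m21_cons x w : m21 (mat (x :: w)) = m11 (mat w).
Proof. by rewrite mat_cons. Qed.

Lemma mat1 x : mat [:: x] = Mat2 x 1 1 0.
Proof. by rewrite mat_cons /=; congr Mat2; ring. Qed.

(* Every [mat w] has determinant 1 (in characteristic 2, -1 = 1). *)
Lemma mat_det w : mdet (mat w) = 1.
Proof.
elim: w => [|x w IH]; first by rewrite /mdet /=; ring.
by rewrite mat_cons /mdet /= -IH /mdet -[RHS]polyF2_oppE; ring.
Qed.

(* Non-constant partial quotients: the denominators grow with the length. *)
Definition ncst (p : {poly F2}) := (1 < size p)%N.

Lemma ncst_neq0 {p} : ncst p -> p != 0.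
Proof. by rewrite /ncst -size_poly_gt0 => H; lia. Qed.

Lemma mat_size {w} : all ncst w ->
  (size (m21 (mat w)) < size (m11 (mat w)))%N /\ (size w < size (m11 (mat w)))%N.
Proof.
elim: w => [|x w IH]; first by rewrite /= size_poly0 size_poly1.
move=> /andP [hx /IH]; rewrite m11_cons m21_cons.
set K := m11 (mat w); set L := m21 (mat w) => -[H1 H2].
have K0 : K != 0 by rewrite -size_poly_gt0 (leq_ltn_trans (leq0n _) H1).
have S : size (x * K) = (size x + size K).-1 by rewrite size_mul // ncst_neq0.
have S2 : size (x * K + L) = size (x * K).
  rewrite size_polyDl // S; move: hx H1; rewrite /ncst.
  by set sx := size x; set sK := size K; set sL := size L; clearbody sx sK sL; lia.
rewrite S2 S [size (_ :: _)]/=; move: hx H2; rewrite /ncst.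
by set sx := size x; set sK := size K; set sw := size w; clearbody sx sK sw; lia.
Qed.

Lemma m11_neq0 {w} : all ncst w -> m11 (mat w) != 0.
Proof. by move=> H; have [H1 _] := mat_size H; rewrite -size_poly_gt0; lia. Qed.

Lemma m21_neq0 w : all ncst w -> w != [::] -> m21 (mat w) != 0.
Proof. by case: w => [|x w] //= /andP [_ /m11_neq0]; rewrite mul0r mul1r addr0. Qed.

Lemma cf_mat w x : all ncst (rcons w x) ->
  foldr (fun a acc => ladd a (linv acc)) (lpoly x) (map lpoly w) =
  lsv (FR (m11 (mat (rcons w x))) (m21 (mat (rcons w x)))).
Proof.
elim: w => [|y w IH]; first by rewrite [rcons _ _]/= mat1 /FR IP1 mulr1.
rewrite rcons_cons => /andP [hy H]; rewrite [map _ _]/= [foldr _ _ _]/= IH //.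
have K0 := @m11_neq0 (rcons w x) H; have L0 : m21 (mat (rcons w x)) != 0.
  by apply: m21_neq0 => //; case: (w).
rewrite (linvS (FR_inv K0 L0)) m11_cons m21_cons.
change (lpoly y) with (lsv (LP y)); rewrite -lsvD; congr lsv.
by rewrite /FR LPD LPM mulrDl -mulrA LP_IP // mulr1.
Qed.

Section Words.
Variables (T : Type) (x0 : T) (e : nat -> T).

Lemma size_W n : size (Wword e n) = (2 ^ n - 1)%N.
Proof.
elim: n => [|n IH] //=; rewrite size_cat /= IH expnS.
by have := expn_gt0 2 n; lia.
Qed.

Lemma W_prefix n d i : (i < size (Wword e n))%N ->
  nth x0 (Wword e (n + d)) i = nth x0 (Wword e n) i.
Proof.
move=> Hi; elim: d => [|d IH]; first by rewrite addn0.
have : (size (Wword e n) <= size (Wword e (n + d)))%N.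
  by rewrite !size_W leq_sub2r // leq_pexp2l // leq_addr.
by rewrite addnS /= nth_cat IH => H; case: ifP => // /negbT; rewrite -leqNgt; lia.
Qed.

Lemma size_W_gt i : (i < size (Wword e i.+1))%N.
Proof. by rewrite size_W; have := ltn_expl i.+1 (ltnSn 1); lia. Qed.

Lemma sword_nth N i : (i < size (Wword e N))%N -> sword x0 e i = nth x0 (Wword e N) i.
Proof.
move=> Hi; rewrite /sword.
have [H|H] := leqP N i.+1.
  by rewrite -(subnKC H) W_prefix // subnKC // size_W_gt.
by rewrite -(subnKC (ltnW H)) W_prefix // size_W_gt.
Qed.

Lemma map_sword N : map (sword x0 e) (iota 0 (size (Wword e N))) = Wword e N.
Proof.
rewrite -[RHS](mkseq_nth x0) /mkseq; apply/eq_in_map => i.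
by rewrite mem_iota => /andP [_ H]; apply: sword_nth.
Qed.

Lemma sword_all (P : pred T) i : (forall k, P (e k)) -> P (sword x0 e i).
Proof.
move=> H; have : all P (Wword e i.+1).
  by elim: i.+1 => [|n IH] //=; rewrite all_cat IH /= H IH.
by move/all_nthP => /(_ x0 i (size_W_gt i)).
Qed.

End Words.

Lemma size_mul_exp_le (C p : {poly F2}) (n : nat) : p != 0 ->
  (size (C * p ^+ n)%R <= size C + (size p).-1 * n)%N.
Proof.
move=> p0; apply: leq_trans (size_polyMleq _ _) _; rewrite -size_exp.
have : (0 < size (p ^+ n))%N by rewrite size_poly_gt0 expf_neq0.
by set s := size (p ^+ n); clearbody s; lia.
Qed.

Section Folded.
Variables a b c : {poly F2}.

Local Notation e := (eps3 a b c).

Lemma eps3_0 K : e (3 * K) = a.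
Proof. by rewrite /eps3 modnMr. Qed.

Lemma eps3_1 K : e (3 * K).+1 = b.
Proof. by rewrite /eps3 (_ : ((3 * K).+1 %% 3 = 1)%N) //; lia. Qed.

Lemma eps3_2 K : e (3 * K).+2 = c.
Proof. by rewrite /eps3 (_ : ((3 * K).+2 %% 3 = 2)%N) //; lia. Qed.

(* The entries of mat W_N = [[pw N, rw N], [rw N, uw N]]. *)
Fixpoint pw (N : nat) : {poly F2} := if N is N'.+1 then e N' * pw N' ^+ 2 else 1.
Fixpoint rw (N : nat) : {poly F2} := if N is N'.+1 then e N' * pw N' * rw N' + 1 else 0.
Definition uw (N : nat) : {poly F2} := if N is N'.+1 then e N' * rw N' ^+ 2 else 1.

Lemma pwS N : pw N.+1 = e N * pw N ^+ 2. Proof. by []. Qed.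
Lemma rwS N : rw N.+1 = e N * pw N * rw N + 1. Proof. by []. Qed.

(* W_(N+1) = W_N e_N W_N, and det (mat W_N) = 1 simplifies the product. *)
Lemma mat_W N : mat (Wword e N) = Mat2 (pw N) (rw N) (rw N) (uw N).
Proof.
elim: N => [|N IH] //=.
have D := mat_det (Wword e N); rewrite IH /mdet /= in D.
have {}D : pw N * uw N = 1 + rw N * rw N by rewrite -D; ring.
rewrite mat_cat mat_cons IH /mmul /=; congr Mat2; ring: poly_two0 D.
Qed.

(* Splitting r_(3K) = Y0 + Y1 + Y2: one period multiplies p by
   al p^7 (al = a^4 b^2 c), and each Y_i follows an affine recursion. *)
Record ysplit := YS { yP : {poly F2}; y0 : {poly F2}; y1 : {poly F2}; y2 : {poly F2} }.

(* al = a^4 b^2 c = e_(3K+2) e_(3K+1)^2 e_(3K)^4. *)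
Definition al := c * b ^+ 2 * a ^+ 4.

Fixpoint ys (K : nat) : ysplit :=
  if K is K'.+1 then
    let: YS P Y0 Y1 Y2 := ys K' in
    YS (al * P ^+ 8) (al * P ^+ 7 * Y0 + c * b ^+ 2 * a ^+ 3 * P ^+ 6)
       (al * P ^+ 7 * Y1 + c * b * a ^+ 2 * P ^+ 4) (al * P ^+ 7 * Y2 + 1)
  else YS 1 0 0 0.

Lemma ys_pw_rw K : let: YS P Y0 Y1 Y2 := ys K in
  pw (3 * K) = P /\ rw (3 * K) = Y0 + Y1 + Y2.
Proof.
elim: K => [|K IH]; first by rewrite /= !addr0.
rewrite (_ : (3 * K.+1 = (3 * K).+2.+1)%N) /=; last by lia.
case: (ys K) IH => P Y0 Y1 Y2 [-> ->].
by rewrite eps3_0 eps3_1 eps3_2 /al; split; ring.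
Qed.

Lemma ys_rel K : let: YS P Y0 Y1 Y2 := ys K in
  [/\ Y0 ^+ 2 = b * P * Y1, Y1 ^+ 2 = c * P * Y2 & Y2 ^+ 2 = a * P * Y0 + P ^+ 2 + 1].
Proof.
elim: K => [|K IH]; first by split; rewrite /= expr0n /=; ring: poly_two0.
rewrite /=; case: (ys K) IH => P Y0 Y1 Y2 [R0 R1 R2] /=.
by rewrite /al; split; ring: poly_two0 R0 R1 R2.
Qed.

Definition cA := a^+3*b^+2*c + a^+2*b^+2*c^+2 + a*b^+3*c^+2 + b^+4*c^+2 + a*b^+2*c^+3
           + a*b*c^+4 + a^+2*b*c + a*b^+2*c + a*b*c^+2 + c^+4 + 1.
Definition cB0 := a^+4*b^+2*c + a^+3*b^+2*c^+2 + a^+2*b^+3*c^+2 + a*b^+4*c^+2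
            + a^+2*b^+2*c^+3 + a^+2*b*c^+4.
Definition cB1 := a^+3*b^+2*c + a^+2*b^+2*c^+2 + a*b^+3*c^+2 + a^+2*b*c^+3.
Definition cB2 := a^+2*b*c + a*b^+2*c + a*b*c^+2.
Definition cC1 := b^+4*c^+2 + cB1 + cB2*c^+2.
Definition cC2 := c^+4 + cB2.

(* The degree-8 form homogenised in (r, P): P^8 Phi (r / P). *)
Definition hform (r P : {poly F2}) : {poly F2} :=
  r ^+ 8 + (cA * P ^+ 8 + (cB0 * r * P ^+ 7 + (cB1 * r ^+ 2 * P ^+ 6 + cB2 * r ^+ 4 * P ^+ 4))).

(* In terms of the Y_i, the powers r^(2^j) are affine in Y0, Y1, Y2, and the
   degree-8 form in (r, P) collapses to a polynomial in P alone. *)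
Section Identity.
Variables P Y0 Y1 Y2 : {poly F2}.
Hypotheses (R0 : Y0 ^+ 2 = b * P * Y1) (R1 : Y1 ^+ 2 = c * P * Y2)
  (R2 : Y2 ^+ 2 = a * P * Y0 + P ^+ 2 + 1).

Let r := Y0 + Y1 + Y2.

(* The squares of r = Y0 + Y1 + Y2, by Frobenius and the relations. *)
Lemma r_pow2 : r ^+ 2 = a * P * Y0 + b * P * Y1 + c * P * Y2 + P ^+ 2 + 1.
Proof. rewrite /r; ring: poly_two0 R0 R1 R2. Qed.

Lemma r_pow4 : r ^+ 4 = a * c ^+ 2 * P ^+ 3 * Y0 + a ^+ 2 * b * P ^+ 3 * Y1
  + b ^+ 2 * c * P ^+ 3 * Y2 + c ^+ 2 * P ^+ 4 + c ^+ 2 * P ^+ 2 + P ^+ 4 + 1.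
Proof. rewrite (exprM r 2 2) r_pow2; ring: poly_two0 R0 R1 R2. Qed.

Lemma r_pow8 : r ^+ 8 = a * b ^+ 4 * c ^+ 2 * P ^+ 7 * Y0
  + a ^+ 2 * b * c ^+ 4 * P ^+ 7 * Y1 + a ^+ 4 * b ^+ 2 * c * P ^+ 7 * Y2
  + b ^+ 4 * c ^+ 2 * P ^+ 8 + b ^+ 4 * c ^+ 2 * P ^+ 6 + c ^+ 4 * P ^+ 8
  + c ^+ 4 * P ^+ 4 + P ^+ 8 + 1.
Proof. rewrite (exprM r 4 2) r_pow4; ring: poly_two0 R0 R1 R2. Qed.

Lemma hform_Y : hform r P = cC1 * P ^+ 6 + cC2 * P ^+ 4 + 1.
Proof.
rewrite /hform r_pow8 r_pow4 r_pow2 /r /cC1 /cC2 /cA /cB0 /cB1 /cB2.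
by apply: subr0_eq; ring: poly_two0.
Qed.

End Identity.

Lemma hform_period K :
  hform (rw (3 * K)) (pw (3 * K)) = cC1 * pw (3 * K) ^+ 6 + cC2 * pw (3 * K) ^+ 4 + 1.
Proof.
have := ys_pw_rw K; have := ys_rel K.
by case: (ys K) => P Y0 Y1 Y2 [R0 R1 R2] [-> ->]; apply: hform_Y.
Qed.

(* The degree-8 equation; in characteristic 2, beta^8 = A + B0 beta + ... is
   Phi beta = 0. *)
Definition Phi (z : LS) : LS :=
  z ^+ 8 + (LP cA + (LP cB0 * z + (LP cB1 * z ^+ 2 + LP cB2 * z ^+ 4))).

Lemma Phi_FR (r P : {poly F2}) : P != 0 -> Phi (FR r P) = FR (hform r P) (P ^+ 8).
Proof.
move=> P0; have u := LP_IP P0.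
rewrite /Phi /FR /hform IPX //; move: cA cB0 cB1 cB2 => A B0 B1 B2.
by rewrite !LPD !LPM ?LPX; ring: u.
Qed.

Definition Phi_loss : int := (size cB0 + size cB1 + size cB2)%N%:Z.

Lemma Phi_agree {z z' : LS} M : deg_le (lsv z) 0 -> deg_le (lsv z') 0 ->
  agree M (lsv z) (lsv z') -> agree (M + Phi_loss) (lsv (Phi z)) (lsv (Phi z')).
Proof.
move=> V V' A; have AX n := LS_agree_exp n M V V' A.
have AL (p : {poly F2}) (n : nat) : (size p <= size cB0 + size cB1 + size cB2)%N ->
    agree (M + Phi_loss) (lsv (LP p * z ^+ n)) (lsv (LP p * z' ^+ n)).
  move=> Hp; apply: agree_le (LS_agree_LPmul p M (LS_deg_le_exp n V)
    (LS_deg_le_exp n V') (AX n)) _; rewrite /Phi_loss; lia.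
apply: LS_agree_add; first by apply: agree_le (AX 8%N) _; rewrite /Phi_loss; lia.
apply: LS_agree_add => //.
rewrite -[LP cB0 * z]/(LP cB0 * z ^+ 1) -[LP cB0 * z']/(LP cB0 * z' ^+ 1).
by apply: LS_agree_add; [|apply: LS_agree_add]; apply: AL; lia.
Qed.

Section NonConstant.
Hypotheses (ha : ncst a) (hb : ncst b) (hc : ncst c).

Lemma eps3_ncst k : ncst (e k).
Proof. by rewrite /eps3; case: ifP => _ //; case: ifP. Qed.

Lemma pw_size N : pw N != 0 /\ (N < size (pw N))%N.
Proof.
elim: N => [|N [p0 Hp]]; first by rewrite /= oner_neq0 size_poly1.
have e0 := ncst_neq0 (eps3_ncst N); have := eps3_ncst N; rewrite /ncst => he.
rewrite pwS expr2; split; first by rewrite !mulf_neq0.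
rewrite !size_mul ?mulf_neq0 //.
by move: he Hp; set se := size _; set sp := size _; lia.
Qed.

Lemma pw_neq0 N : pw N != 0. Proof. by case: (pw_size N). Qed.

Lemma ncst_add1_neq0 (x p r : {poly F2}) :
  ncst x -> p != 0 -> r != 0 -> x * p * r + 1 != 0.
Proof.
move=> e1 p0 r0; have x0 := ncst_neq0 e1.
have S : (1 < size (x * p * r)%R)%N.
  rewrite !size_mul ?mulf_neq0 //; move: e1 r0 p0; rewrite /ncst -!size_poly_gt0.
  by set sx := size x; set sp := size p; set sr := size r; clearbody sx sp sr; lia.
by rewrite -size_poly_gt0 size_polyDl ?size_poly1 //; lia.
Qed.

Lemma rw_neq0 N : (0 < N)%N -> rw N != 0.
Proof.
case: N => // N _; elim: N => [|N IH]; first by rewrite /= mulr0 add0r oner_neq0.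
by rewrite rwS ncst_add1_neq0 ?eps3_ncst ?pw_neq0.
Qed.

Let sw (i : nat) : {poly F2} := sword 0 e i.
Let cf (n : nat) : laurent := cf_fin (fun i => lpoly (sw i)) n.

Lemma sw_ncst i : ncst (sw i).
Proof. exact: sword_all eps3_ncst. Qed.

Let prefix_mat (n : nat) : mat2 := mat (map sw (iota 0 n.+1)).

Lemma prefix_all n : all ncst (map sw (iota 0 n.+1)).
Proof. by apply/allP => x /mapP [i _ ->]; apply: sw_ncst. Qed.

Lemma prefixE n : map sw (iota 0 n.+1) = rcons (map sw (iota 0 n)) (sw n).
Proof. by rewrite -[n.+1]addn1 iotaD map_cat cats1. Qed.

Lemma cf_FR n : cf n = lsv (FR (m11 (prefix_mat n)) (m21 (prefix_mat n))).
Proof.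
rewrite /cf /cf_fin /prefix_mat prefixE -cf_mat -?prefixE ?prefix_all //.
by rewrite -map_comp.
Qed.

Lemma prefix_m21_size n : (n < size (m21 (prefix_mat n)))%N.
Proof.
rewrite /prefix_mat (iotaD 0 1 n) map_cat [map _ (iota 0 1)]/= cat1s m21_cons.
have H : all ncst (map sw (iota 1 n)) by apply/allP => x /mapP [i _ ->]; apply: sw_ncst.
by have [_] := mat_size H; rewrite size_map size_iota.
Qed.

Lemma prefix_m21_neq0 n : m21 (prefix_mat n) != 0.
Proof. by rewrite -size_poly_gt0; have := prefix_m21_size n; lia. Qed.

Lemma prefix_det n : m11 (prefix_mat n.+1) * m21 (prefix_mat n)
  + m11 (prefix_mat n) * m21 (prefix_mat n.+1) = 1.
Proof.
rewrite /prefix_mat -[n.+2]addn1 iotaD map_cat mat_cat.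
rewrite (_ : map sw (iota (0 + n.+1) 1) = [:: sw n.+1]) // mat1.
have D := mat_det (map sw (iota 0 n.+1)).
case: (mat _) D => m1 m2 m3 m4; rewrite /mdet /mmul /= => D.
have {}D : m1 * m4 = 1 + m2 * m3 by rewrite -D; ring.
by ring: poly_two0 D.
Qed.

Lemma cf_step n : agree (- n%:Z) (cf n.+1) (cf n).
Proof.
rewrite !cf_FR; have q0 := prefix_m21_neq0 n; have q1 := prefix_m21_neq0 n.+1.
apply: agree_le (FR_close _ _ _ _ q1 q0) _.
rewrite prefix_det size_poly1 size_mul //.
have := prefix_m21_size n; have := prefix_m21_size n.+1.
by set s1 := size (m21 _); set s0 := size (m21 _); clearbody s0 s1; lia.
Qed.

Definition xL : laurent := climit cf.

Lemma xL_lcvg : lcvg cf xL.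
Proof. exact: climit_lcvg cf_step. Qed.

Lemma xL_laurent : is_laurent xL.
Proof.
have S0 : 0 <= (size (sw 0))%:Z by [].
have V0 : deg_le (cf 0) (size (sw 0))%:Z.
  by apply: deg_le_trans (lpoly_deg_le (sw 0)) _; lia.
exact: deg_le_laurent (climit_deg_le (fun n => stab_deg_le cf_step n S0 V0)).
Qed.

Lemma cf_W N : cf (2 ^ N.+1 - 2) = lsv (FR (pw N.+1) (rw N.+1)).
Proof.
have E := map_sword _ 0 e N.+1; rewrite size_W in E.
rewrite cf_FR /prefix_mat (_ : (2 ^ N.+1 - 2).+1 = 2 ^ N.+1 - 1)%N ?E ?mat_W //.
by rewrite expnS; have := expn_gt0 2 N; lia.
Qed.

(* beta is the limit of bt N = r_N / p_N. *)
Let bt (N : nat) : laurent := lsv (FR (rw N) (pw N)).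

(* r_(N+1)/p_(N+1) - r_N/p_N = 1/p_(N+1), of degree <= -N. *)
Lemma bt_step N : agree (- N%:Z) (bt N.+1) (bt N).
Proof.
have p0 := pw_neq0 N; have p1 := pw_neq0 N.+1.
apply: agree_le (FR_close _ _ _ _ p1 p0) _.
have -> : rw N.+1 * pw N + rw N * pw N.+1 = pw N by rewrite rwS pwS; ring: poly_two0.
rewrite size_mul //; have := pw_size N.+1; case=> _.
by set s1 := size (pw N.+1); set s0 := size (pw N); clearbody s0 s1; lia.
Qed.

Lemma bt_deg_le N : deg_le (bt N) 0.
Proof.
have Z0 : (0 : int) <= 0 by [].
by apply: (stab_deg_le bt_step N Z0); rewrite /bt /FR LP0 mul0r.
Qed.

Definition zL : laurent := climit bt.

Lemma zL_deg_le : deg_le zL 0.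
Proof. exact: climit_deg_le bt_deg_le. Qed.

Lemma zL_laurent : is_laurent zL.
Proof. exact: deg_le_laurent zL_deg_le. Qed.

(* Every limit x of the convergents satisfies x * zL = 1: near coefficient k,
   x is p_(N+1) / r_(N+1) and zL is r_(N+1) / p_(N+1) for N large. *)
Lemma lcvg_mul_zL x : is_laurent x -> lcvg cf x -> lmul x zL = lone.
Proof.
move=> Lx Hx; apply: funext => k.
have [Bx [Bx0 Vx]] := deg_le_exists Lx.
pose N := (absz k + absz Bx)%N; pose m := (2 ^ N.+1 - 2)%N.
have Nm : (N <= m)%N by rewrite /m; have := ltn_expl N.+1 (ltnSn 1); lia.
have Ax : agree (- N%:Z) x (cf m).
  by apply: agree_le (lcvg_agree cf_step m Hx) _; lia.
have Vcf : deg_le (cf m) Bx by move=> j Hj; rewrite -Ax ?Vx //; lia.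
have Az : agree (- N%:Z) zL (bt N.+1).
  by apply: agree_le (climit_agree bt_step N.+1) _; lia.
have Lcf : is_laurent (cf m) by rewrite /m cf_W; apply: lsvP.
have Z0 : (0 : int) <= 0 by [].
rewrite (lmul_agree Lx Lcf zL_laurent (lsvP _) Bx0 Z0 Vx Vcf zL_deg_le (bt_deg_le _)
  Ax Az); last by lia.
by rewrite /m cf_W -lsvM FR_inv ?pw_neq0 ?rw_neq0.
Qed.

(* Phi (r_3K / p_3K) has degree <= const - 2 deg p_3K <= const - 6K. *)
Lemma Phi_convergent_deg_le K : deg_le (lsv (Phi (FR (rw (3 * K)) (pw (3 * K)))))
  ((size cC1 + size cC2)%N%:Z - (6 * K)%N%:Z).
Proof.
have P0 := pw_neq0 (3 * K); have [_ SP] := pw_size (3 * K).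
rewrite Phi_FR // hform_period; apply: deg_le_trans (FR_deg_le _ _) _.
move: SP; set P := pw (3 * K) => SP.
have SG : (size (cC1 * P ^+ 6 + cC2 * P ^+ 4 + 1)%R
    <= size cC1 + size cC2 + (size P).-1 * 6 + 1)%N.
  apply: leq_trans (size_polyD _ _) _; rewrite geq_max size_poly1 andbC.
  apply/andP; split; first lia.
  apply: leq_trans (size_polyD _ _) _; rewrite geq_max; apply/andP; split.
    apply: leq_trans (size_mul_exp_le _ _ 6 P0) _.
    by set s1 := size cC1; set s2 := size cC2; set sP := size P; clearbody s1 s2 sP; lia.
  apply: leq_trans (size_mul_exp_le _ _ 4 P0) _.
  by set s1 := size cC1; set s2 := size cC2; set sP := size P; clearbody s1 s2 sP; lia.
have S8 := size_exp P 8.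
have : (0 < size (P ^+ 8))%N by rewrite size_poly_gt0 expf_neq0.
move: SG S8 SP; set sG := size _; set s8 := size (P ^+ 8); set sP := size P.
by clearbody sG s8 sP; lia.
Qed.

(* Near coefficient k, Phi zL agrees with Phi (r_3K / p_3K), whose coefficient
   of t^k vanishes, for K large. *)
Lemma Phi_zL : Phi (LSmk zL_laurent) = 0.
Proof.
apply/lsv_inj/funext => k; rewrite [RHS]/=.
pose K := (absz k + absz Phi_loss + size cC1 + size cC2).+1%N.
have Z0 : (0 : int) <= 0 by [].
have A := Phi_agree (z := LSmk zL_laurent) (z' := FR (rw (3 * K)) (pw (3 * K)))
  (- (3 * K)%N%:Z) zL_deg_le (bt_deg_le _) (climit_agree bt_step (3 * K)).
rewrite A; last by rewrite /K; set L := Phi_loss; clearbody L; lia.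
rewrite (Phi_convergent_deg_le K) //; rewrite /K.
by set L := Phi_loss; set s1 := size cC1; set s2 := size cC2; clearbody L s1 s2; lia.
Qed.

End NonConstant.

Lemma Phi_root_eq (z : LS) : Phi z = 0 ->
  lexp (lsv z) 8 = ladd (lpoly cA) (ladd (lmul (lpoly cB0) (lsv z))
    (ladd (lmul (lpoly cB1) (lexp (lsv z) 2)) (lmul (lpoly cB2) (lexp (lsv z) 4)))).
Proof. by move/LS_addr_eq0; rewrite !lexpE => ->. Qed.

End Folded.

Theorem mainTheorem5 (a b c : {poly F2}) :
  (1 < size a)%N -> (1 < size b)%N -> (1 < size c)%N ->
  let s := fun i => lpoly (sword 0 (eps3 a b c) i) in
  let A := a^+3*b^+2*c + a^+2*b^+2*c^+2 + a*b^+3*c^+2 + b^+4*c^+2 + a*b^+2*c^+3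
           + a*b*c^+4 + a^+2*b*c + a*b^+2*c + a*b*c^+2 + c^+4 + 1 in
  let B0 := a^+4*b^+2*c + a^+3*b^+2*c^+2 + a^+2*b^+3*c^+2 + a*b^+4*c^+2
            + a^+2*b^+2*c^+3 + a^+2*b*c^+4 in
  let B1 := a^+3*b^+2*c + a^+2*b^+2*c^+2 + a*b^+3*c^+2 + a^+2*b*c^+3 in
  let B2 := a^+2*b*c + a*b^+2*c + a*b*c^+2 in
  (exists x, is_laurent x /\ lcvg (cf_fin s) x) /\
  (forall x, is_laurent x -> lcvg (cf_fin s) x ->
     let beta := linv x in
     lexp beta 8 =
       ladd (lpoly A)
         (ladd (lmul (lpoly B0) beta)
            (ladd (lmul (lpoly B1) (lexp beta 2)) (lmul (lpoly B2) (lexp beta 4))))).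
Proof.
move=> ha hb hc s A B0 B1 B2; split.
  by exists (xL a b c); split; [exact: xL_laurent | exact: xL_lcvg a b c ha hb hc].
move=> x Lx Hx beta.
rewrite /beta (linvE Lx (zL_laurent a b c ha hb hc) (lcvg_mul_zL a b c ha hb hc x Lx Hx)).
exact: Phi_root_eq (Phi_zL a b c ha hb hc).
Qed.
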